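(* Let $n=2k+1$ with $k$ a positive integer, and let $(\Gamma,+)$ be an abelian group of order $n$ with neutral element $e$ such that $\sum_{g\in\Gamma} g = e$ and $2g\neq e$ for all $g\in\Gamma\setminus\{e\}$. Let $p,q$ be two new symbols and let $P_n=(\Gamma\times(\Gamma\setminus\{e\}))\cup\{p,q\}$. Define the lines - $L_g=\{(h,g): h\in\Gamma\}$ for $g\in\Gamma\setminus\{e\}$; - $l_{p_g}=\{(g,h): h\in\Gamma\setminus\{e\}\}\cup\{p\}$ for $g\in\Gamma$; - $l_{q_g}=\{(h,h+g): h\in\Gamma,\ h+g\neq e\}\cup\{q\}$ for $g\in\Gamma$, and let $\mathcal{L}_n$ be the family of all these $3n-1$ lines. Then the linear system $\mathcal{C}_{n,n+1}=(P_n,\mathcal{L}_n)$ satisfies $\tau(\mathcal{C}_{n,n+1})=n+1$.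
   Context: A linear system is a pair $(P,\mathcal{L})$ with $P$ a finite set of points and $\mathcal{L}$ a family of subsets of $P$ (lines) such that any two distinct lines share at most one point. A transversal is a set of points meeting every line; $\tau$ denotes the minimum cardinality of a transversal. *)

From HB Require Import structures.
From mathcomp Require Import all_boot all_order all_algebra.
Set Implicit Arguments. Unset Strict Implicit. Unset Printing Implicit Defensive.
Import GRing.Theory.
Local Open Scope ring_scope.

Definition is_transversal (X : finType) (P : {set X}) (L : {set {set X}})
  (T : {set X}) : bool :=
  (T \subset P) && [forall l in L, T :&: l != set0].

Definition tau (X : finType) (P : {set X}) (L : {set {set X}}) : nat :=
  \big[minn/#|P|.+1]_(T : {set X} | is_transversal P L T) #|T|.

(* The construction C_{n,n+1}.  Points live in (Gamma * Gamma) + bool: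
   inl (h, g) is the pair (h,g); inr false is p, inr true is q. *)
Section Construction.
Variable G : finZmodType.
Definition cpt := ((G * G) + bool)%type.
Definition pp : cpt := inr false.
Definition qq : cpt := inr true.

Definition Pn : {set cpt} :=
  [set x : cpt | if x is inl hg then hg.2 != 0 else true].

Definition Lg (g : G) : {set cpt} := [set inl (h, g) | h : G].
Definition lp (g : G) : {set cpt} :=
  pp |: [set inl (g, h) | h in [set h : G | h != 0]].
Definition lq (g : G) : {set cpt} :=
  qq |: [set inl (h, h + g) | h in [set h : G | h + g != 0]].

Definition Ln : {set {set cpt}} :=
  [set Lg g | g in [set g : G | g != 0]] :|: [set lp g | g : G]
    :|: [set lq g | g : G].
End Construction.

From HB Require Import structures.
From Pilot Require Import Defs.
From mathcomp Require Import all_boot all_order all_algebra.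
From mathcomp Require Import zify.
Import GRing.Theory.
Local Open Scope ring_scope.

(* The row l_{p_0} together with q is a transversal of size n + 1.  Conversely,
   a transversal T meets each of the n - 1 columns L_g in a distinct point, so
   it has at least n - 1 points in the grid Gamma x (Gamma \ {e}); if it misses
   p (resp. q), the n lines l_{p_g} (resp. l_{q_g}) force n grid points.  The
   only way to get away with n points is to miss both p and q with exactly n
   grid points, one on each row and one on each diagonal.  Then the first
   coordinates and the differences h' - h both run through Gamma, so the
   second coordinates sum to e + e = e.  But n grid points cover the n - 1
   columns with exactly one collision, so the second coordinates sum to
   \sum_(g != e) g plus a nonzero element, that is, to a nonzero element. *)

(* [tau] is a [\big[minn/_]] whose default is not neutral, so only the
   semigroup part of the bigop theory (e.g. [bigD1]) applies to it. *)
HB.instance Definition _ := SemiGroup.isComLaw.Build nat minn minnA minnC.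

Section Transversal.
Context {X : finType} {P : {set X}} {L : {set {set X}}}.

Lemma transversal_meet {T l : {set X}} :
  Defs.is_transversal P L T -> l \in L -> exists2 x, x \in T & x \in l.
Proof.
case/andP=> _ /forallP/(_ l)/implyP meetT /meetT.
by case/set0Pn=> x /setIP[xT xl]; exists x.
Qed.

Lemma tau_le_card {T : {set X}} :
  Defs.is_transversal P L T -> (tau P L <= #|T|)%N.
Proof. by move=> hT; rewrite /tau (bigD1 T) //= geq_minl. Qed.

Lemma tau_ge {m : nat} {T0 : {set X}} : Defs.is_transversal P L T0 ->
  (forall T, Defs.is_transversal P L T -> m <= #|T|)%N -> (m <= tau P L)%N.
Proof.
move=> T0tr minT; apply: (big_ind (fun t => m <= t)%N) => //.
- apply: leq_trans (minT _ T0tr) _; apply: leq_trans (leqnSn _).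
  by apply: subset_leq_card; case/andP: T0tr.
- by move=> a b ma mb; rewrite leq_min ma mb.
Qed.

End Transversal.

Section SumOverImage.
Context {I : finType} {G : finZmodType} (f : I -> G).

Lemma sum_imset_card (A : {set I}) :
  #|f @: A| = #|A| -> \sum_(x in A) f x = \sum_(y in f @: A) y.
Proof. by move/eqP/imset_injP=> injf; rewrite big_imset. Qed.

Lemma sum_imset_collision (A : {set I}) : #|A| = #|f @: A|.+1 ->
  exists2 a, a \in A & \sum_(x in A) f x = \sum_(y in f @: A) y + f a.
Proof.
move=> cardA.
have /dinjectivePn[a aA [b /andP[ba bA] fab]] : ~~ dinjectiveb f A.
  by apply/negP=> /dinjectiveP/imset_injP/eqP; rewrite cardA => /n_Sn.
have imD1 : f @: (A :\ a) = f @: A.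
  apply/eqP; rewrite eqEsubset imsetS ?subD1set //=.
  apply/subsetP=> _ /imsetP[x xA ->]; have [->|xa] := eqVneq x a.
    by rewrite fab imset_f // !inE ba.
  by rewrite imset_f // !inE xa.
exists a => //; rewrite (big_setD1 a aA) addrC -imD1 sum_imset_card //.
by rewrite imD1; apply/eqP; rewrite -eqSS -cardA (cardsD1 a A) aA.
Qed.

End SumOverImage.

Section Construction.
Variable G : finZmodType.

Local Notation p := (@pp G).
Local Notation q := (@qq G).
Local Notation nonzero := [set g : G | g != 0].

Lemma card_nonzero : #|nonzero| = #|G|.-1.
Proof. by rewrite -(cardsC1 0); apply: eq_card => g; rewrite !inE. Qed.

Lemma sum_nonzero : \sum_(g in nonzero) g = \sum_(g : G) g.
Proof.
by rewrite [RHS](bigD1 0) //= add0r; apply: eq_bigl => g; rewrite inE.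
Qed.

Lemma Lg_in_Ln {g : G} : g != 0 -> Lg g \in Ln G.
Proof. by move=> gnz; rewrite !inE imset_f ?inE. Qed.

Lemma lp_in_Ln g : lp g \in Ln G.
Proof. by rewrite !inE imset_f ?orbT. Qed.

Lemma lq_in_Ln g : lq g \in Ln G.
Proof. by rewrite !inE imset_f ?orbT. Qed.

Definition grid (T : {set cpt G}) : {set G * G} := [set x | inl x \in T].

Lemma in_grid T x : (x \in grid T) = (inl x \in T).
Proof. by rewrite inE. Qed.

Lemma card_grid_split (T : {set cpt G}) :
  #|T| = (#|grid T| + (p \in T) + (q \in T))%N.
Proof.
have -> : #|grid T| = (\sum_x if inl x \in T then 1 else 0)%N.
  by rewrite -sum1_card big_mkcond; apply: eq_bigr => x _; rewrite in_grid.
rewrite -sum1_card big_mkcond big_sumType big_bool /=.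
by rewrite /pp /qq; case: (_ \in T); case: (_ \in T); lia.
Qed.

Lemma card_transversal_lp0 : (#|q |: lp 0%R| <= #|G|.+1)%N.
Proof.
have n_gt0 : (0 < #|G|)%N by apply/card_gt0P; exists 0.
rewrite cardsU1 cardsU1 -add1n leq_add ?leq_b1 //.
rewrite -(prednK n_gt0) -add1n leq_add ?leq_b1 //.
by rewrite -card_nonzero leq_imset_card.
Qed.

Lemma transversal_lp0 : Defs.is_transversal (Pn G) (Ln G) (q |: lp 0).
Proof.
apply/andP; split.
  apply/subsetP=> x; rewrite /lp !inE.
  by case/or3P=> [/eqP-> | /eqP-> | /imsetP[h hnz ->]] //=; rewrite inE in hnz.
apply/forallP=> l; apply/implyP=> /setUP[/setUP[]|] /imsetP[g gnz ->];
  apply/set0Pn.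
- by exists (inl (0, g)); rewrite !inE imset_f ?orbT // imset_f.
- by exists p; rewrite !inE eqxx orbT.
- by exists q; rewrite !inE eqxx.
Qed.

Section LowerBound.
Variable T : {set cpt G}.
Hypothesis T_transversal : Defs.is_transversal (Pn G) (Ln G) T.

Lemma grid_nonzero {x : G * G} : x \in grid T -> x.2 != 0.
Proof.
case/andP: T_transversal => /subsetP TP _.
by rewrite in_grid => /TP; rewrite inE.
Qed.

Lemma snd_grid : snd @: grid T = nonzero.
Proof.
apply/eqP; rewrite eqEsubset; apply/andP; split; apply/subsetP=> g.
  by case/imsetP=> x /grid_nonzero xnz ->; rewrite inE.
rewrite inE => gnz.
have [x xT] := transversal_meet T_transversal (Lg_in_Ln gnz).
by case/imsetP=> h _ xE; apply/imsetP; exists (h, g); rewrite // in_grid -xE.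
Qed.

Lemma fst_grid : p \notin T -> fst @: grid T = [set: G].
Proof.
move=> pT; apply/eqP; rewrite eqEsubset subsetT; apply/subsetP=> g _.
have [x xT] := transversal_meet T_transversal (lp_in_Ln g).
case/setU1P=> [xE|/imsetP[h _ xE]]; first by rewrite -xE xT in pT.
by apply/imsetP; exists (g, h); rewrite // in_grid -xE.
Qed.

Lemma diff_grid : q \notin T -> (fun x => x.2 - x.1) @: grid T = [set: G].
Proof.
move=> qT; apply/eqP; rewrite eqEsubset subsetT; apply/subsetP=> g _.
have [x xT] := transversal_meet T_transversal (lq_in_Ln g).
case/setU1P=> [xE|/imsetP[h _ xE]]; first by rewrite -xE xT in qT.
by apply/imsetP; exists (h, h + g); rewrite /= ?in_grid -?xE // addrC addKr.
Qed.

Hypothesis sumG : \sum_(g : G) g = 0.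

Lemma card_grid_neq : p \notin T -> q \notin T -> #|grid T| != #|G|.
Proof.
move=> pT qT; apply/negP=> /eqP cardA.
have sum_all (f : G * G -> G) : f @: grid T = [set: G] ->
    \sum_(x in grid T) f x = 0.
  move=> imf; rewrite sum_imset_card imf ?cardsT ?cardA //.
  by rewrite -[RHS]sumG; apply: eq_bigl => g; rewrite inE.
have sum_snd : \sum_(x in grid T) x.2 = 0.
  have := sum_all _ (diff_grid qT); rewrite sumrB (sum_all fst) ?fst_grid //.
  by rewrite subr0.
have n_gt0 : (0 < #|G|)%N by apply/card_gt0P; exists 0.
have [|a aA] := sum_imset_collision snd (grid T).
  by rewrite snd_grid card_nonzero cardA prednK.
rewrite sum_snd snd_grid sum_nonzero sumG add0r => /esym/eqP.
by rewrite (negbTE (grid_nonzero aA)).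
Qed.

Lemma card_transversal_ge : (#|G|.+1 <= #|T|)%N.
Proof.
have n_gt0 : (0 < #|G|)%N by apply/card_gt0P; exists 0.
have cover_cols : (#|G| <= #|grid T|.+1)%N.
  by rewrite -(prednK n_gt0) ltnS -card_nonzero -snd_grid leq_imset_card.
have cover_rows : p \notin T -> (#|G| <= #|grid T|)%N.
  by move/fst_grid=> imfst; rewrite -cardsT -imfst leq_imset_card.
have cover_diags : q \notin T -> (#|G| <= #|grid T|)%N.
  by move/diff_grid=> imdiff; rewrite -cardsT -imdiff leq_imset_card.
rewrite card_grid_split; case pT: (p \in T); case qT: (q \in T) => /=.
- by rewrite !addn1 ltnS.
- by rewrite addn1 addn0 ltnS cover_diags ?qT.
- by rewrite addn0 addn1 ltnS cover_rows ?pT.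
rewrite !addn0 ltn_neqAle eq_sym cover_rows ?pT // andbT.
by rewrite card_grid_neq ?pT ?qT.
Qed.

End LowerBound.
End Construction.

Theorem proposition3p1 (G : finZmodType) (k : nat) :
  (0 < k)%N ->
  #|G| = (2 * k).+1 ->
  \sum_(g : G) g = 0 ->
  (forall g : G, g != 0 -> g *+ 2 != 0) ->
  tau (Pn G) (Ln G) = #|G|.+1.
Proof.
(* Only the vanishing of the sum is needed for the value of tau. *)
move=> _ _ sumG _; apply/eqP; rewrite eqn_leq.
rewrite (leq_trans (tau_le_card (transversal_lp0 G)) (card_transversal_lp0 G)).
by apply: tau_ge (transversal_lp0 G) _ => T Ttr; apply: card_transversal_ge.
Qed.
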